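(* Let $\mathcal{F}$ be a closure system on a finite set $X$ with closure operator $\phi$, let $\Sigma$ be the canonical direct basis of $\mathcal{F}$, let $A\in\mathcal{F}$ be meet-irreducible with unique upper cover $A^*$ in $\mathcal{F}$, and write $A^*\setminus A=\{d_1,\dots,d_k\}$. Let $Y_1,\dots,Y_t$ be the minimal (with respect to inclusion) transversals of the hypergraph $H=\langle A,\mathcal{T}\rangle$, where $\mathcal{T}=\{A\setminus Z: Z\in\mathcal{F},\ Z\subsetneq A\}$, and let $\Sigma_1=\{Y_j\rightarrow d_i: j\leq t,\ i\leq k\}$. Then $\Sigma\cup\Sigma_1$ is a direct basis of the closure system $\mathcal{F}^*=\mathcal{F}\setminus\{A\}$.
   Context: A closure system on $X$ is a family of subsets of $X$ containing $X$ and closed under intersections; its closure operator maps $Y$ to the smallest member containing $Y$. An implication $C\rightarrow d$ ($C\subseteq X$, $d\in X$) holds on $Y$ if $C\not\subseteq Y$ or $d\in Y$. A set $\Sigma$ of implications is a basis of a closure system $\mathcal{G}$ if $\mathcal{G}$ is exactly the family of subsets satisfying all implications of $\Sigma$; it is direct if moreover, with $\psi$ the closure operator of $\mathcal{G}$, $\psi(Y)=Y\cup\{d:(C\rightarrow d)\in\Sigma,\ C\subseteq Y\}$ for all $Y\subseteq X$. The canonical direct basis of $\mathcal{F}$ is the set of all $C\rightarrow d$ with $d\notin C$, $d\in\phi(C)$, and $d\notin\phi(C')$ for all $C'\subsetneq C$. $A\in\mathcal{F}$ is meet-irreducible if $A\neq X$ and $A$ has a unique upper cover in $\mathcal{F}$.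 A hypergraph is a pair $\langle B,\mathcal{B}\rangle$ with $\mathcal{B}\subseteq 2^B$; $U\subseteq B$ is a transversal if $U\cap V\neq\emptyset$ for every $V\in\mathcal{B}$. *)

From mathcomp Require Import all_boot.
Set Implicit Arguments. Unset Strict Implicit. Unset Printing Implicit Defensive.

Section Closure.
Variable X : finType.

Definition imp := ({set X} * X)%type.

(* closure system: contains X and closed under (finite, nonempty) intersections;
   on a finite set this is the same as closure under arbitrary intersections
   (the empty intersection being X). *)
Definition closure_system (F : {set {set X}}) : Prop :=
  [set: X] \in F /\ (forall A B, A \in F -> B \in F -> A :&: B \in F).

Definition phi (F : {set {set X}}) (Y : {set X}) : {set X} :=
  \bigcap_(Z in F | Y \subset Z) Z.

Definition holds (i : imp) (Y : {set X}) : bool := ~~ (i.1 \subset Y) || (i.2 \in Y).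

Definition is_basis (S : {set imp}) (G : {set {set X}}) : Prop :=
  forall Y : {set X}, (Y \in G) = [forall i in S, holds i Y].

Definition is_direct_basis (S : {set imp}) (G : {set {set X}}) : Prop :=
  is_basis S G /\
  forall Y : {set X}, phi G Y = Y :|: [set d | [exists C : {set X}, ((C, d) \in S) && (C \subset Y)]].

Definition canonical_direct_basis (F : {set {set X}}) : {set imp} :=
  [set i : imp | [&& i.2 \notin i.1, i.2 \in phi F i.1 &
                  [forall C' : {set X}, (C' \proper i.1) ==> (i.2 \notin phi F C')]]].

Definition upper_cover (F : {set {set X}}) (A B : {set X}) : Prop :=
  [/\ B \in F, A \proper B &
      forall Z, Z \in F -> A \proper Z -> Z \proper B -> False].

Definition meet_irreducible (F : {set {set X}}) (A : {set X}) : Prop :=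
  [/\ A \in F, A != [set: X] & exists! B, upper_cover F A B].

Definition transversal (B : {set X}) (calB : {set {set X}}) (U : {set X}) : Prop :=
  U \subset B /\ forall V, V \in calB -> U :&: V != set0.

Definition minimal_transversal (B : {set X}) (calB : {set {set X}}) (U : {set X}) : Prop :=
  transversal B calB U /\ forall U', transversal B calB U' -> U' \subset U -> U' = U.

Definition hyperedges (F : {set {set X}}) (A : {set X}) : {set {set X}} :=
  [set A :\: Z | Z in [set Z in F | Z \proper A]].

End Closure.

(** Removing the meet-irreducible A changes the closure of Y only when
    phi(Y) = A, in which case the new closure is the cover A*.  Now
    phi(Y) = A forces Y to meet every A \ Z with Z ⊊ A closed (Z would
    otherwise contain Y, hence A), so Y contains a minimal transversal Y_j;
    conversely, if Y ⊇ Y_j then phi(Y) ∩ A is a closed subset of A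
    containing Y_j, so it is not proper (Y_j would miss the hyperedge
    A \ (phi(Y) ∩ A)); thus phi(Y) ⊇ A and, if phi(Y) ≠ A, even
    phi(Y) ⊇ A* by meet-irreducibility.  Hence the implications Y_j → d_i
    add exactly A* \ A to the old closure when it equals A and nothing
    otherwise, and directness of the canonical direct basis carries over. *)
From mathcomp Require Import all_boot.
Set Implicit Arguments. Unset Strict Implicit. Unset Printing Implicit Defensive.

Section ClosureOperator.
Variable X : finType.
Implicit Types (F G : {set {set X}}) (S : {set imp X}) (Y Z C D : {set X}).

Definition consequences S Y :=
  [set d | [exists C : {set X}, ((C, d) \in S) && (C \subset Y)]].

Lemma consequencesU S1 S2 Y :
  consequences (S1 :|: S2) Y = consequences S1 Y :|: consequences S2 Y.
Proof.
apply/setP=> d; rewrite !inE; apply/existsP/orP => [[C]|].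
  by rewrite inE => /andP[/orP[] CS CY]; [left|right]; apply/existsP; exists C;
     rewrite CS CY.
by case=> /existsP[C /andP[CS CY]]; exists C; rewrite inE CS ?orbT CY.
Qed.

Lemma consequences_setX (Ys : {set {set X}}) D Y :
  consequences [set i : imp X | (i.1 \in Ys) && (i.2 \in D)] Y =
  if [exists T in Ys, T \subset Y] then D else set0.
Proof.
apply/setP=> d; rewrite inE; apply/existsP/idP => [[C]|].
  rewrite inE /= => /andP[/andP[CYs dD] CY].
  by have -> : [exists T in Ys, T \subset Y] by apply/exists_inP; exists C.
case: exists_inP => [[T TYs TY] dD|]; last by rewrite inE.
by exists T; rewrite inE /= TYs dD TY.
Qed.

Lemma phiP G Y x :
  reflect (forall Z, Z \in G -> Y \subset Z -> x \in Z) (x \in phi G Y).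
Proof.
apply: (iffP bigcapP) => [H Z ZG YZ|H Z /andP[]]; last exact: H.
by apply: H; rewrite ZG YZ.
Qed.

Lemma subset_phi G Y : Y \subset phi G Y.
Proof. by apply/subsetP=> x xY; apply/phiP=> Z _ /subsetP; apply. Qed.

Lemma phi_min G Y Z : Z \in G -> Y \subset Z -> phi G Y \subset Z.
Proof. by move=> ZG YZ; apply/subsetP=> x /phiP; apply. Qed.

Lemma phi_mem F Y : closure_system F -> phi F Y \in F.
Proof. by case=> FT FI; rewrite /phi; elim/big_ind: _ => // Z /andP[]. Qed.

Lemma phiS F Y1 Y2 :
  closure_system F -> Y1 \subset Y2 -> phi F Y1 \subset phi F Y2.
Proof.
move=> cF Y12; apply: phi_min; first exact: phi_mem.
exact: subset_trans Y12 (subset_phi _ _).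
Qed.

(* A point of phi(Y) \ Y is implied by any inclusion-minimal C ⊆ Y whose
   closure still contains it, and such a C is a premise of the canonical
   direct basis. *)
Lemma phi_canonical_direct_basis F Y : closure_system F ->
  phi F Y = Y :|: consequences (canonical_direct_basis F) Y.
Proof.
move=> cF; apply/setP=> x; rewrite !inE; apply/idP/orP => [xY|]; last first.
  case=> [/(subsetP (subset_phi _ _))//|/existsP[C /andP[]]].
  by rewrite inE /= => /and3P[_ xC _] /(phiS cF)/subsetP; apply.
have [xY'|xY'] := boolP (x \in Y); [by left | right].
have [C /minsetP[/andP[CY xC] Cmin]] :=
  @ex_minset _ (fun C => (C \subset Y) && (x \in phi F C))
    (ex_intro _ Y (introT andP (conj (subxx Y) xY))).
apply/existsP; exists C; rewrite CY andbT inE /= xC /=.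
apply/andP; split; first by apply: contraNN xY'; apply: subsetP.
apply/forallP=> C'; apply/implyP=> CC'; have C'C := proper_sub CC'.
apply: contraTN CC' => xC'.
by rewrite -(Cmin C') ?properxx // xC' (subset_trans C'C CY).
Qed.

Lemma is_basis_of_phi G S :
  (forall Y, phi G Y \in G) ->
  (forall Y, phi G Y = Y :|: consequences S Y) -> is_basis S G.
Proof.
move=> phiG phiS Y.
have -> : (Y \in G) = (phi G Y \subset Y).
  apply/idP/idP => [|sub]; first by move/phi_min; apply.
  by have <- : phi G Y = Y by apply/eqP; rewrite eqEsubset sub subset_phi.
rewrite phiS subUset subxx /=; apply/subsetP/forall_inP => [H [C d] iS|H d].
  rewrite /holds -implybE; apply/implyP => CY; apply: H.
  by rewrite inE; apply/existsP; exists C; rewrite iS CY.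
by rewrite inE => /existsP[C /andP[iS CY]]; have := H _ iS; rewrite /holds CY.
Qed.

End ClosureOperator.

Section MinimalTransversal.
Variables (X : finType) (B : {set X}) (calB : {set {set X}}).

Definition transversalb (U : {set X}) :=
  (U \subset B) && [forall V in calB, U :&: V != set0].

Lemma transversalP U : reflect (transversal B calB U) (transversalb U).
Proof.
by apply: (iffP andP) => -[UB /forall_inP H]; split.
Qed.

Lemma minimal_transversal_exists U : transversal B calB U ->
  exists2 T, minimal_transversal B calB T & T \subset U.
Proof.
move=> /transversalP tU; have [T /minsetP[/transversalP tT Tmin] TU] :=
  @minset_exists _ transversalb _ tU.
by exists T => //; split => // U' /transversalP; apply: Tmin.
Qed.

End MinimalTransversal.

Section RemoveMeetIrreducible.
Variables (X : finType) (F : {set {set X}}) (A Astar : {set X}).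
Hypothesis cF : closure_system F.
Hypothesis A_irr : meet_irreducible F A.
Hypothesis A_Astar : upper_cover F A Astar.
Implicit Types (Y Z T : {set X}).

Let AF : A \in F. Proof. by case: A_irr. Qed.
Let AstarF : Astar \in F. Proof. by case: A_Astar. Qed.
Let A_proper : A \proper Astar. Proof. by case: A_Astar. Qed.
Let Astar_neq : Astar != A.
Proof. by apply: contraTneq A_proper => ->; rewrite properxx. Qed.

(* A closed set strictly above A contains a cover of A, which is Astar by
   uniqueness of the upper cover. *)
Lemma upper_cover_subset Z : Z \in F -> A \proper Z -> Astar \subset Z.
Proof.
move=> ZF AZ.
have [W /minsetP[/and3P[WF AW WZ] Wmin]] :=
  @ex_minset _ (fun W => [&& W \in F, A \proper W & W \subset Z])
    (ex_intro _ Z (introT and3P (And3 ZF AZ (subxx Z)))).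
have A_W : upper_cover F A W.
  split=> // V VF AV VW; have VsubW := proper_sub VW.
  by move: VW; rewrite -(Wmin V) ?properxx // VF AV (subset_trans VsubW WZ).
case: A_irr => _ _ [C [_ Cuniq]].
by rewrite -(Cuniq _ A_Astar) (Cuniq _ A_W).
Qed.

Lemma phi_setD1_neq Y : phi F Y != A -> phi (F :\ A) Y = phi F Y.
Proof.
move=> ne; apply/eqP; rewrite eqEsubset; apply/andP; split.
  by apply: phi_min; [rewrite !inE ne phi_mem | exact: subset_phi].
apply/subsetP=> x /phiP H; apply/phiP=> Z ZFA; apply: H.
by move: ZFA; rewrite !inE => /andP[].
Qed.

Lemma phi_setD1_eq Y : phi F Y = A -> phi (F :\ A) Y = Astar.
Proof.
move=> E; apply/eqP; rewrite eqEsubset; apply/andP; split.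
  apply: phi_min; first by rewrite !inE Astar_neq AstarF.
  by rewrite (subset_trans (subset_phi F Y)) // E proper_sub.
apply/subsetP=> x xA; apply/phiP=> Z; rewrite !inE => /andP[ZA ZF] YZ.
apply: (subsetP (upper_cover_subset ZF _)) => //.
by rewrite properEneq eq_sym ZA -E phi_min.
Qed.

Lemma phi_setD1_mem Y : phi (F :\ A) Y \in F :\ A.
Proof.
have [/phi_setD1_eq ->|ne] := eqVneq (phi F Y) A.
  by rewrite !inE Astar_neq.
by rewrite phi_setD1_neq // !inE ne phi_mem.
Qed.

Lemma transversal_subset_phi T Y :
  transversal A (hyperedges F A) T -> T \subset Y -> A \subset phi F Y.
Proof.
move=> [TA Thit] TY; set W := phi F Y :&: A.
have WF : W \in F by case: cF => _; apply; [exact: phi_mem|].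
have [<-|ne] := eqVneq W A; first exact: subsetIl.
have /Thit/set0Pn[x] : A :\: W \in hyperedges F A.
  by apply/imsetP; exists W; rewrite // inE WF properEneq ne subsetIr.
rewrite !inE => /andP[xT]; have xA := subsetP TA x xT.
by rewrite xA (subsetP (subset_phi F Y)) ?(subsetP TY).
Qed.

Lemma phi_eq_transversal Y : phi F Y = A -> transversal A (hyperedges F A) Y.
Proof.
move=> E; split=> [|V /imsetP[Z]]; first by rewrite -E subset_phi.
rewrite inE => /andP[ZF ZA] ->; apply/set0Pn.
have /subsetPn[y yY yZ] : ~~ (Y \subset Z).
  apply: contraTN ZA => /(phi_min ZF).
  by rewrite E properE => ->; rewrite andbF.
by exists y; rewrite !inE yY yZ -E (subsetP (subset_phi F Y)).
Qed.

Variable Ys : {set {set X}}.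
Hypothesis YsP :
  forall Y, Y \in Ys <-> minimal_transversal A (hyperedges F A) Y.

Lemma phi_setD1 Y : phi (F :\ A) Y =
  phi F Y :|: (if [exists T in Ys, T \subset Y] then Astar :\: A else set0).
Proof.
have [E|ne] := eqVneq (phi F Y) A.
  have [T minT TY] := minimal_transversal_exists (phi_eq_transversal E).
  have -> : [exists T in Ys, T \subset Y].
    by apply/exists_inP; exists T => //; apply/YsP.
  rewrite phi_setD1_eq // E.
  by rewrite -{1}(setID Astar A) (setIidPr (proper_sub A_proper)).
rewrite phi_setD1_neq //.
case: exists_inP => [[T /YsP[tT _] TY]|_]; last by rewrite setU0.
apply/esym/setUidPl; rewrite subDset subsetU //.
rewrite (upper_cover_subset (phi_mem Y cF)) ?orbT //.
by rewrite properEneq eq_sym ne (transversal_subset_phi tT TY).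
Qed.

End RemoveMeetIrreducible.

Theorem mainTheorem7 (X : finType) (F : {set {set X}}) (A Astar : {set X})
  (Ys : {set {set X}}) :
  closure_system F ->
  meet_irreducible F A ->
  upper_cover F A Astar ->
  (forall Y, Y \in Ys <-> minimal_transversal A (hyperedges F A) Y) ->
  is_direct_basis
    (canonical_direct_basis F :|:
       [set i : imp X | (i.1 \in Ys) && (i.2 \in Astar :\: A)])
    (F :\ A).
Proof.
move=> cF A_irr A_Astar YsP.
have direct Y : phi (F :\ A) Y = Y :|: consequences
    (canonical_direct_basis F :|:
       [set i : imp X | (i.1 \in Ys) && (i.2 \in Astar :\: A)]) Y.
  rewrite (phi_setD1 cF A_irr A_Astar YsP) consequencesU consequences_setX.
  by rewrite setUA -phi_canonical_direct_basis.
split; last exact: direct.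
apply: is_basis_of_phi direct => Y.
exact: phi_setD1_mem cF A_irr A_Astar Y.
Qed.
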